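(* Let $n\ge 2$ be an integer and $K=L=T=n^2$. Then every degree table $(\alpha,\beta)\in\mathcal{A}(K,L,T)$ satisfies $\operatorname{N}(\alpha,\beta)\ge n^4+3n^2$. Moreover, letting $G(n)$ denote the number of distinct integers in $\operatorname{Set}(\alpha)+\operatorname{Set}(\beta)$ for the $\mathsf{GASP}_n$ vectors with $K=L=T=n^2$, one has $G(n)/(n^4+3n^2)<1.38$ for all $n\ge 2$ and $G(n)/(n^4+3n^2)\to 1$ as $n\to\infty$; in particular $\mathsf{GASP}_n$ is asymptotically optimal, i.e. $G(n)/\min_{(\alpha,\beta)\in\mathcal{A}(n^2,n^2,n^2)}\operatorname{N}(\alpha,\beta)\to 1$.
   Context: A degree table with parameters $K,L,T$ is a tuple $(\alpha_{\mathrm p},\alpha_{\mathrm s},\beta_{\mathrm p},\beta_{\mathrm s})$ of nonnegative integer vectors of lengths $K,T,L,T$ such that, with $\alpha=(\alpha_{\mathrm p}\mid\alpha_{\mathrm s})$, $\beta=(\beta_{\mathrm p}\mid\beta_{\mathrm s})$: entries of $\alpha$ are distinct; entries of $\beta$ are distinct; for every $n\in\operatorname{Set}(\alpha_{\mathrm p})+\operatorname{Set}(\beta_{\mathrm p})$ there is a unique $i\in\operatorname{Set}(\alpha)$ and unique $j\in\operatorname{Set}(\beta)$ with $n=i+j$. $\mathcal{A}(K,L,T)$ is the set of these, $\operatorname{N}(\alpha,\beta)=|\operatorname{Set}(\alpha)+\operatorname{Set}(\beta)|$, $\operatorname{Set}(v)$ is the set of entries of $v$, $A+B=\{a+b\}$.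 The code $\mathsf{GASP}_r$ ($L\le K$, $1\le r\le\min\{K,T\}$): $\alpha_{\mathrm p}=(0,1,\ldots,K-1)$; $\alpha_{\mathrm s}$ = the $T$ smallest elements of $\{KL+j+Kt: 0\le j\le r-1, t\in\mathbb{Z}_{\ge0}\}$ in increasing order; $\beta_{\mathrm p}=(0,K,\ldots,K(L-1))$; $\beta_{\mathrm s}=(KL,\ldots,KL+T-1)$. *)

From HB Require Import structures.
From mathcomp Require Import all_boot all_order all_algebra.

Set Implicit Arguments. Unset Strict Implicit. Unset Printing Implicit Defensive.

Definition sumset (a b : seq nat) : seq nat := [seq i + j | i <- a, j <- b].

Definition Nsum (alpha beta : seq nat) : nat := size (undup (sumset alpha beta)).

(* (ap, as_, bp, bs) is a degree table with parameters K, L, T,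
   i.e. belongs to A(K,L,T). alpha = ap ++ as_, beta = bp ++ bs. *)
Definition is_degree_table (K L T : nat) (ap as_ bp bs : seq nat) : Prop :=
  [/\ size ap = K, size as_ = T, size bp = L, size bs = T &
      uniq (ap ++ as_)] /\ uniq (bp ++ bs) /\
      forall n, n \in sumset ap bp ->
        exists i j, [/\ i \in ap ++ as_, j \in bp ++ bs, n = i + j &
          forall i' j', i' \in ap ++ as_ -> j' \in bp ++ bs -> n = i' + j' ->
            i' = i /\ j' = j].

Definition gasp_S (K L r x : nat) : bool :=
  has (fun j => has (fun t => x == K * L + j + K * t) (iota 0 x.+1)) (iota 0 r).

Definition gasp_alpha_p (K : nat) : seq nat := iota 0 K.
(* the T smallest elements of gasp_S in increasing order: all of them lie
   below K*L + K*T (the elements with j = 0, t < T already give T of them) *)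
Definition gasp_alpha_s (K L T r : nat) : seq nat :=
  take T [seq x <- iota 0 (K * L + K * T) | gasp_S K L r x].
Definition gasp_beta_p (K L : nat) : seq nat := [seq K * i | i <- iota 0 L].
Definition gasp_beta_s (K L T : nat) : seq nat := iota (K * L) T.

Definition G (n : nat) : nat :=
  Nsum (gasp_alpha_p (n ^ 2) ++ gasp_alpha_s (n ^ 2) (n ^ 2) (n ^ 2) n)
       (gasp_beta_p (n ^ 2) (n ^ 2) ++ gasp_beta_s (n ^ 2) (n ^ 2) (n ^ 2)).

From HB Require Import structures.
From mathcomp Require Import all_boot all_order all_algebra.
From mathcomp Require Import all_classical all_reals all_analysis.
From mathcomp Require Import zify lra.
Import Order.TTheory GRing.Theory Num.Theory.
Import numFieldNormedType.Exports.

Set Implicit Arguments. Unset Strict Implicit.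

(* By unique decodability the K L sums of alpha_p and beta_p are pairwise
   distinct and differ from every sum involving an entry of alpha_s or beta_s, so for K = L
   it suffices to find K + 2 T distinct sums in (alpha + beta_s) U (alpha_s + beta).  With
   fewer, both sumsets would have the minimal size |A| + |B| - 1, which forces alpha, beta_s
   and alpha_s, beta to be arithmetic progressions with common differences d and e.  As
   alpha_s lies in alpha and beta_s in beta, d and e divide each other, so alpha and beta are
   progressions with the same difference and the same length.  Then p + q = p' + q' with the
   indices of p in alpha_p and q in beta_p exchanged, so every q in beta_p has the index of p,
   which is impossible as beta_p has two entries.  With N = n^2, every sum of GASP_n lies in [0, N^2 + 2N), in
   {N^2 + N m + j : 2 <= m < N, j < n} or in [2 N^2, 2 N^2 + N n + n), whence
   G(n) <= n^4 + 2 n^3 + 2 n^2; the minimum of N(alpha, beta) over A(N,N,N) lies between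
   n^4 + 3 n^2 and G(n). *)

(** * Sumsets of minimal size *)

Definition arith_prog (x0 d k : nat) : seq nat := [seq x0 + i * d | i <- iota 0 k].

Lemma arith_progP x0 d k x :
  reflect (exists2 i, i < k & x = x0 + i * d) (x \in arith_prog x0 d k).
Proof.
apply: (iffP mapP) => -[i]; first by rewrite mem_iota => /andP [_ ik] ->; exists i.
by move=> ik ->; exists i; rewrite ?mem_iota.
Qed.

Lemma arith_prog_dvd x0 d k x e :
  x \in arith_prog x0 d k -> x + e \in arith_prog x0 d k -> d %| e.
Proof.
move=> /arith_progP [i _ ->] /arith_progP [i' _ e_eq].
by apply/dvdnP; exists (i' - i); rewrite mulnBl; lia.
Qed.

Section Staircase.

Variables (a b : nat -> nat) (m n : nat) (Z : seq nat).
Hypothesis a_incr : forall i i', i < i' -> i' < m -> a i < a i'.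
Hypothesis b_incr : forall j j', j < j' -> j' < n -> b j < b j'.
Hypothesis sums_in_Z : forall i j, i < m -> j < n -> a i + b j \in Z.

Let a_mono i i' : i <= i' -> i' < m -> a i <= a i'.
Proof. by rewrite leq_eqVlt => /orP [/eqP -> //| lt] lt'; rewrite ltnW ?a_incr. Qed.

Let b_mono j j' : j <= j' -> j' < n -> b j <= b j'.
Proof. by rewrite leq_eqVlt => /orP [/eqP -> //| lt] lt'; rewrite ltnW ?b_incr. Qed.

Let a_inj i i' : i < m -> i' < m -> a i = a i' -> i = i'.
Proof.
move=> lt_i lt_i' eq_a; case: (ltngtP i i') => // lt.
  by have := a_incr lt lt_i'; lia.
by have := a_incr lt lt_i; lia.
Qed.

Let b_inj j j' : j < n -> j' < n -> b j = b j' -> j = j'.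
Proof.
move=> lt_j lt_j' eq_b; case: (ltngtP j j') => // lt.
  by have := b_incr lt lt_j'; lia.
by have := b_incr lt lt_j; lia.
Qed.

Definition lower_stair i j :=
  [seq a k + b 0 | k <- iota 0 i] ++ [seq a i + b k | k <- iota 0 j.+1].

Definition upper_stair i j :=
  [seq a i + b k | k <- iota j (n - j)] ++ [seq a k + b n.-1 | k <- iota i.+1 (m - i.+1)].

Lemma lower_stairP i j : i < m -> j < n ->
  [/\ uniq (lower_stair i j), {subset lower_stair i j <= Z}
    & {in lower_stair i j, forall x, x <= a i + b j}].
Proof.
move=> lt_i lt_j; split.
- rewrite cat_uniq !map_inj_in_uniq ?iota_uniq // ?andbT; first last.
  + by move=> k k'; rewrite !mem_iota => /andP [_ ?] /andP [_ ?] ?; apply: a_inj; lia.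
  + by move=> k k'; rewrite !mem_iota => /andP [_ ?] /andP [_ ?] ?; apply: b_inj; lia.
  apply/hasPn => x /mapP [k]; rewrite mem_iota => /andP [_ lt_k] ->.
  apply/mapP => -[k']; rewrite mem_iota => /andP [_ lt_k'].
  have := a_incr (_ : k' < i) lt_i; have := b_mono (leq0n k) (_ : k < n); lia.
- move=> x /[!mem_cat] /orP [] /mapP [k] /[!mem_iota] /andP [_ lt_k] ->; apply: sums_in_Z; lia.
- move=> x /[!mem_cat] /orP [] /mapP [k] /[!mem_iota] /andP [_ lt_k] ->.
    by have := a_mono (_ : k <= i) lt_i; have := b_mono (leq0n j) lt_j; lia.
  by have := b_mono (_ : k <= j) lt_j; lia.
Qed.

Lemma upper_stairP i j : i < m -> j < n ->
  [/\ uniq (upper_stair i j), {subset upper_stair i j <= Z}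
    & {in upper_stair i j, forall x, a i + b j <= x}].
Proof.
move=> lt_i lt_j; split.
- rewrite cat_uniq !map_inj_in_uniq ?iota_uniq // ?andbT; first last.
  + by move=> k k'; rewrite !mem_iota => /andP [? ?] /andP [? ?] ?; apply: b_inj; lia.
  + by move=> k k'; rewrite !mem_iota => /andP [? ?] /andP [? ?] ?; apply: a_inj; lia.
  apply/hasPn => x /mapP [k]; rewrite mem_iota => /andP [lt_ik lt_k] ->.
  apply/mapP => -[k']; rewrite mem_iota => /andP [? ?].
  have := a_incr lt_ik (_ : k < m); have := b_mono (_ : k' <= n.-1) (_ : n.-1 < n); lia.
- move=> x /[!mem_cat] /orP [] /mapP [k] /[!mem_iota] /andP [? ?] ->; apply: sums_in_Z; lia.
- move=> x /[!mem_cat] /orP [] /mapP [k] /[!mem_iota] /andP [? ?] ->.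
    by have := b_mono (_ : j <= k) (_ : k < n); lia.
  by have := a_mono (_ : i <= k) (_ : k < m); have := b_mono (_ : j <= n.-1) (_ : n.-1 < n); lia.
Qed.

(* The lower staircase (0,0) -> (i1,0) -> (i1,j1) and the upper staircase
   (i2,j2) -> (i2,n-1) -> (m-1,n-1) visit m + n points with strictly increasing sums. *)
Lemma stairs_card i1 j1 i2 j2 : i1 < m -> j1 < n -> i2 < m -> j2 < n ->
  i1 + j1 = i2 + j2 -> a i1 + b j1 < a i2 + b j2 -> m + n <= size (undup Z).
Proof.
move=> lt_i1 lt_j1 lt_i2 lt_j2 eq_ij lt_sum.
have [lo_uniq lo_Z lo_le] := lower_stairP lt_i1 lt_j1.
have [up_uniq up_Z up_ge] := upper_stairP lt_i2 lt_j2.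
have stairs_uniq : uniq (lower_stair i1 j1 ++ upper_stair i2 j2).
  rewrite cat_uniq lo_uniq up_uniq andbT; apply/hasPn => x /up_ge x_ge.
  by apply/negP => /lo_le; lia.
have sub : {subset lower_stair i1 j1 ++ upper_stair i2 j2 <= undup Z}.
  by move=> x; rewrite mem_cat mem_undup => /orP [/lo_Z | /up_Z].
by have := uniq_leq_size stairs_uniq sub; rewrite !size_cat !size_map !size_iota; lia.
Qed.

Lemma sumset_antidiagonal : size (undup Z) < m + n ->
  forall i1 j1 i2 j2, i1 < m -> j1 < n -> i2 < m -> j2 < n ->
  i1 + j1 = i2 + j2 -> a i1 + b j1 = a i2 + b j2.
Proof.
move=> small i1 j1 i2 j2 lt_i1 lt_j1 lt_i2 lt_j2 eq_ij.
move: small; rewrite ltnNge => /negP small.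
case: (ltngtP (a i1 + b j1) (a i2 + b j2)) => // lt_sum; case: small.
  exact: stairs_card lt_sum.
exact: stairs_card (esym eq_ij) lt_sum.
Qed.

End Staircase.

Lemma sort_ltn_nth (s : seq nat) i j : uniq s -> i < j -> j < size s ->
  nth 0 (sort leq s) i < nth 0 (sort leq s) j.
Proof.
move=> s_uniq lt_ij lt_j.
have : sorted ltn (sort leq s).
  by rewrite ltn_sorted_uniq_leq sort_uniq s_uniq sort_sorted //; exact: leq_total.
by move/(sorted_ltn_nth ltn_trans 0); apply; rewrite ?inE ?size_sort //; lia.
Qed.

Lemma mem_sort_nth (s : seq nat) : s =i [seq nth 0 (sort leq s) i | i <- iota 0 (size s)].
Proof. by move=> x; rewrite -(mem_sort leq) -{1}(mkseq_nth 0 (sort leq s)) size_sort. Qed.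

Lemma constant_step_arith (f : nat -> nat) d k :
  (forall i, i.+1 < k -> f i.+1 = f i + d) -> forall i, i < k -> f i = f 0 + i * d.
Proof. by move=> step; elim=> [|i IH] lt_i; rewrite ?step ?IH //; lia. Qed.

Lemma small_sumset_arith_prog (A B Z : seq nat) :
  uniq A -> uniq B -> 1 < size A -> 1 < size B ->
  {subset sumset A B <= Z} -> size (undup Z) < size A + size B ->
  exists d a0 b0,
    [/\ 0 < d, A =i arith_prog a0 d (size A) & B =i arith_prog b0 d (size B)].
Proof.
move=> A_uniq B_uniq A_gt1 B_gt1 sub small.
set a := nth 0 (sort leq A); set b := nth 0 (sort leq B).
have a_incr i i' : i < i' -> i' < size A -> a i < a i' by exact: sort_ltn_nth.
have b_incr j j' : j < j' -> j' < size B -> b j < b j' by exact: sort_ltn_nth.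
have sums_in_Z i j : i < size A -> j < size B -> a i + b j \in Z.
  by move=> lt_i lt_j; apply/sub/allpairs_f; rewrite -(mem_sort leq) mem_nth ?size_sort.
have antidiag := sumset_antidiagonal a_incr b_incr sums_in_Z small.
have a_step i : i.+1 < size A -> a i.+1 + b 0 = a i + b 1 by move=> ?; apply: antidiag; lia.
have b_step j : j.+1 < size B -> a 1 + b j = a 0 + b j.+1 by move=> ?; apply: antidiag; lia.
have step0 := b_step 0 B_gt1.
have a01 := a_incr 0 1 isT A_gt1.
have a_ap : [seq a i | i <- iota 0 (size A)] = arith_prog (a 0) (a 1 - a 0) (size A).
  apply/eq_in_map => i /[!mem_iota] /andP [_ lt_i].
  by apply: (constant_step_arith _ lt_i) => k lt_k; have := a_step k lt_k; lia.
have b_ap : [seq b j | j <- iota 0 (size B)] = arith_prog (b 0) (a 1 - a 0) (size B).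
  apply/eq_in_map => j /[!mem_iota] /andP [_ lt_j].
  by apply: (constant_step_arith _ lt_j) => k lt_k; have := b_step k lt_k; lia.
exists (a 1 - a 0), (a 0), (b 0); split.
- by rewrite subn_gt0.
- by move=> x; rewrite mem_sort_nth a_ap.
- by move=> x; rewrite mem_sort_nth b_ap.
Qed.

(** * Lower bound for degree tables *)

Lemma sumsetS (A A' B B' : seq nat) :
  {subset A <= A'} -> {subset B <= B'} -> {subset sumset A B <= sumset A' B'}.
Proof. by move=> AA' BB' _ /allpairsP [[x y] /= [/AA' x_A' /BB' y_B' ->]]; apply: allpairs_f. Qed.

Definition tail_sumset (ap as_ bp bs : seq nat) : seq nat :=
  sumset (ap ++ as_) bs ++ sumset as_ (bp ++ bs).

Section DegreeTable.

Variables (K L T : nat) (ap as_ bp bs : seq nat).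
Hypothesis table : is_degree_table K L T ap as_ bp bs.

Lemma degree_table_sum_inj p q p' q' :
  p \in ap -> q \in bp -> p' \in ap ++ as_ -> q' \in bp ++ bs ->
  p + q = p' + q' -> p = p' /\ q = q'.
Proof.
move=> p_ap q_bp p'_a q'_b e; have [_ [_ unique_sum]] := table.
have [i [j [_ _ _ ij_unique]]] := unique_sum _ (allpairs_f addn p_ap q_bp).
have p_a : p \in ap ++ as_ by rewrite mem_cat p_ap.
have q_b : q \in bp ++ bs by rewrite mem_cat q_bp.
have [-> ->] := ij_unique p q p_a q_b erefl.
by have [-> ->] := ij_unique p' q' p'_a q'_b e.
Qed.

Lemma uniq_sumset_degree_table : uniq (sumset ap bp).
Proof.
have [[_ _ _ _ a_uniq] [b_uniq _]] := table.
move: a_uniq b_uniq; rewrite !cat_uniq => /and3P [ap_uniq _ _] /and3P [bp_uniq _ _].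
apply: allpairs_uniq => // -[x y] [x2 y2] /allpairsP [[p q] /= [p_ap q_bp [-> ->]]].
move=> /allpairsP [[p' q'] /= [p'_ap q'_bp [-> ->]]] /= e.
have p'_a : p' \in ap ++ as_ by rewrite mem_cat p'_ap.
have q'_b : q' \in bp ++ bs by rewrite mem_cat q'_bp.
by have [-> ->] := degree_table_sum_inj p_ap q_bp p'_a q'_b e.
Qed.

Lemma tail_sumset_disjoint x :
  x \in tail_sumset ap as_ bp bs -> x \notin sumset ap bp.
Proof.
have [[_ _ _ _ a_uniq] [b_uniq _]] := table.
move: a_uniq b_uniq; rewrite !cat_uniq => /and3P [_ a_disj _] /and3P [_ b_disj _].
rewrite mem_cat => tail_x; apply/negP => /allpairsP [[p q] /= [p_ap q_bp x_pq]].
case/orP: tail_x => /allpairsP [[u v] /= [u_a v_bs x_uv]].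
  have v_b : v \in bp ++ bs by rewrite mem_cat v_bs orbT.
  have [_ q_v] := degree_table_sum_inj p_ap q_bp u_a v_b (etrans (esym x_pq) x_uv).
  by move/hasPn: b_disj => /(_ v v_bs); rewrite -q_v q_bp.
have u_a' : u \in ap ++ as_ by rewrite mem_cat u_a orbT.
have [p_u _] := degree_table_sum_inj p_ap q_bp u_a' v_bs (etrans (esym x_pq) x_uv).
by move/hasPn: a_disj => /(_ u u_a); rewrite -p_u p_ap.
Qed.

Lemma Nsum_degree_table_ge :
  K * L + size (undup (tail_sumset ap as_ bp bs)) <= Nsum (ap ++ as_) (bp ++ bs).
Proof.
have [[size_ap _ size_bp _ _] _] := table.
have sums_uniq : uniq (sumset ap bp ++ undup (tail_sumset ap as_ bp bs)).
  rewrite cat_uniq uniq_sumset_degree_table undup_uniq andbT /=.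
  by apply/hasPn => x; rewrite mem_undup => /tail_sumset_disjoint.
have sub : {subset sumset ap bp ++ undup (tail_sumset ap as_ bp bs)
            <= undup (sumset (ap ++ as_) (bp ++ bs))}.
  move=> x; rewrite mem_undup mem_cat mem_undup mem_cat => /orP [|/orP []];
    by apply: sumsetS => y; rewrite ?mem_cat => ->; rewrite ?orbT.
by have := uniq_leq_size sums_uniq sub; rewrite size_cat size_allpairs size_ap size_bp.
Qed.

End DegreeTable.

Lemma degree_table_arith_prog_absurd K L T ap as_ bp bs k a0 b0 d :
  is_degree_table K L T ap as_ bp bs -> 0 < K -> 1 < L -> 0 < d ->
  ap ++ as_ =i arith_prog a0 d k -> bp ++ bs =i arith_prog b0 d k -> False.
Proof.
move=> table K_gt0 L_gt1 d_gt0 alphaE betaE.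
have [[size_ap _ size_bp _ _] [b_uniq _]] := table.
have in_prog x0 i : i < k -> x0 + i * d \in arith_prog x0 d k.
  by move=> lt_i; apply/arith_progP; exists i.
set p := nth 0 ap 0; have p_ap : p \in ap by rewrite mem_nth ?size_ap.
have /arith_progP [i lt_i p_eq] : p \in arith_prog a0 d k by rewrite -alphaE mem_cat p_ap.
have bp_const q : q \in bp -> q = b0 + i * d.
  move=> q_bp; have /arith_progP [j lt_j q_eq] : q \in arith_prog b0 d k.
    by rewrite -betaE mem_cat q_bp.
  have a_j : a0 + j * d \in ap ++ as_ by rewrite alphaE in_prog.
  have b_i : b0 + i * d \in bp ++ bs by rewrite betaE in_prog.
  have swap : p + q = (a0 + j * d) + (b0 + i * d) by rewrite p_eq q_eq; lia.
  have [p_aj _] := degree_table_sum_inj table p_ap q_bp a_j b_i swap.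
  by move: p_aj; rewrite q_eq p_eq => /addnI /eqP; rewrite eqn_pmul2r // => /eqP ->.
have : nth 0 bp 0 != nth 0 bp 1.
  by move: b_uniq; rewrite cat_uniq => /andP [bp_uniq _]; rewrite nth_uniq // size_bp // ltnW.
have [q0_bp q1_bp] : nth 0 bp 0 \in bp /\ nth 0 bp 1 \in bp.
  by split; apply: mem_nth; rewrite size_bp // ltnW.
by rewrite (bp_const _ q0_bp) (bp_const _ q1_bp) eqxx.
Qed.

Lemma tail_sumset_large K T ap as_ bp bs : 1 < K -> 1 < T ->
  is_degree_table K K T ap as_ bp bs ->
  K + 2 * T <= size (undup (tail_sumset ap as_ bp bs)).
Proof.
move=> K_gt1 T_gt1 table.
have [[size_ap size_as size_bp size_bs a_uniq] [b_uniq _]] := table.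
have [as_uniq bs_uniq] : uniq as_ /\ uniq bs.
  by move: a_uniq b_uniq; rewrite !cat_uniq => /and3P [_ _ ->] /and3P [_ _ ->].
set X := tail_sumset ap as_ bp bs; rewrite leqNgt; apply/negP => small.
have [d [a0 [s0 [d_gt0 alphaE bsE]]]] : exists d a0 s0,
    [/\ 0 < d, ap ++ as_ =i arith_prog a0 d (size (ap ++ as_)) & bs =i arith_prog s0 d (size bs)].
  apply: (small_sumset_arith_prog (Z := X)) => //; rewrite ?size_cat ?size_ap ?size_as ?size_bs //.
  - lia.
  - by move=> x x_in; rewrite mem_cat x_in.
  - lia.
have [e [c0 [b0 [e_gt0 asE betaE]]]] : exists e c0 b0,
    [/\ 0 < e, as_ =i arith_prog c0 e (size as_) & bp ++ bs =i arith_prog b0 e (size (bp ++ bs))].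
  apply: (small_sumset_arith_prog (Z := X)) => //; rewrite ?size_cat ?size_bp ?size_as ?size_bs //.
  - lia.
  - by move=> x x_in; rewrite mem_cat x_in orbT.
  - lia.
rewrite !size_cat size_ap size_as size_bp size_bs in alphaE bsE asE betaE.
have [c0_as c1_as] : c0 \in as_ /\ c0 + e \in as_.
  by rewrite !asE; split; apply/arith_progP; [exists 0 | exists 1]; lia.
have [s0_bs s1_bs] : s0 \in bs /\ s0 + d \in bs.
  by rewrite !bsE; split; apply/arith_progP; [exists 0 | exists 1]; lia.
have de : d = e.
  apply/eqP; rewrite eqn_dvd; apply/andP; split.
  - by apply: (@arith_prog_dvd a0 d (K + T) c0); rewrite -alphaE mem_cat ?c0_as ?c1_as orbT.
  - by apply: (@arith_prog_dvd b0 e (K + T) s0); rewrite -betaE mem_cat ?s0_bs ?s1_bs orbT.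
subst e; apply: (degree_table_arith_prog_absurd table _ K_gt1 d_gt0 alphaE betaE).
exact: ltnW.
Qed.

Lemma Nsum_square_degree_table_ge K T ap as_ bp bs : 1 < K -> 1 < T ->
  is_degree_table K K T ap as_ bp bs -> K * K + K + 2 * T <= Nsum (ap ++ as_) (bp ++ bs).
Proof.
move=> K_gt1 T_gt1 table.
by have := Nsum_degree_table_ge table; have := tail_sumset_large K_gt1 T_gt1 table; lia.
Qed.

(** * The code GASP *)

Lemma divmod_inj K i i' k k' : i < K -> i' < K -> i + K * k = i' + K * k' -> i = i' /\ k = k'.
Proof.
move=> lt_i lt_i' e; have := edivn_eq k lt_i; have := edivn_eq k' lt_i'.
by rewrite [k * K + _]addnC [k' * K + _]addnC [k * K]mulnC [k' * K]mulnC e => -> [-> ->].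
Qed.

Lemma gasp_SP K L r x : 0 < K ->
  reflect (exists2 j, j < r & exists t, x = K * L + j + K * t) (gasp_S K L r x).
Proof.
move=> K_gt0; apply: (iffP hasP) => [[j] | [j lt_j [t ->]]].
  by rewrite mem_iota => /andP [_ lt_j] /hasP [t _ /eqP ->]; exists j => //; exists t.
exists j; first by rewrite mem_iota.
by apply/hasP; exists t => //; rewrite mem_iota /=; have := leq_pmull t K_gt0; lia.
Qed.
Arguments gasp_SP {K L r x}.

Lemma gasp_alpha_s_ge K L T r x : 0 < K -> x \in gasp_alpha_s K L T r -> K * L <= x.
Proof.
by move=> K_gt0 /mem_take; rewrite mem_filter => /andP [/(gasp_SP K_gt0) [j _ [t ->]] _]; lia.
Qed.

Lemma uniq_gasp_alpha_s K L T r : uniq (gasp_alpha_s K L T r).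
Proof. by rewrite take_uniq // filter_uniq // iota_uniq. Qed.

Lemma size_gasp_alpha_s K L T r : 0 < K -> 0 < r -> size (gasp_alpha_s K L T r) = T.
Proof.
move=> K_gt0 r_gt0; rewrite size_takel //.
set W := [seq K * L + 0 + K * t | t <- iota 0 T].
have W_uniq : uniq W.
  by rewrite map_inj_in_uniq ?iota_uniq // => t t' _ _ /addnI /eqP; rewrite eqn_pmul2l // => /eqP.
have := uniq_leq_size W_uniq; rewrite size_map size_iota; apply => x /mapP [t].
rewrite mem_iota mem_filter => /andP [_ lt_t] ->; apply/andP; split.
  by apply/(gasp_SP K_gt0); exists 0 => //; exists t.
by rewrite mem_iota /=; have := leq_mul (leqnn K) lt_t; rewrite mulnS; lia.
Qed.

Lemma gasp_degree_table K L T r : 0 < K -> 0 < L -> 0 < r ->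
  is_degree_table K L T (gasp_alpha_p K) (gasp_alpha_s K L T r)
    (gasp_beta_p K L) (gasp_beta_s K L T).
Proof.
move=> K_gt0 L_gt0 r_gt0.
have K_le_KL : K <= K * L by rewrite leq_pmulr.
have beta_p_lt k : k < L -> K * k + K <= K * L.
  by move=> lt_k; rewrite addnC -mulnS leq_mul2l lt_k orbT.
split; [split | split].
- by rewrite size_iota.
- exact: size_gasp_alpha_s.
- by rewrite size_map size_iota.
- by rewrite size_iota.
- rewrite cat_uniq iota_uniq uniq_gasp_alpha_s andbT /=.
  by apply/hasPn => x /(gasp_alpha_s_ge K_gt0) x_ge; rewrite mem_iota; lia.
- rewrite cat_uniq iota_uniq andbT map_inj_in_uniq ?iota_uniq /=; last first.
    by move=> k k' _ _ /eqP; rewrite eqn_pmul2l // => /eqP.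
  apply/hasPn => x; rewrite mem_iota => /andP [x_ge _].
  by apply/mapP => -[k]; rewrite mem_iota => /andP [_ lt_k] x_eq; have := beta_p_lt k lt_k; lia.
move=> x /allpairsP [[i y] /= [/[!mem_iota] /andP [_ lt_i]]].
move=> /mapP [k /[!mem_iota] /andP [_ lt_k] ->] ->.
have KL_gt := beta_p_lt k lt_k.
exists i, (K * k); split; rewrite ?mem_cat ?mem_iota ?lt_i //.
  by apply/orP; left; apply/mapP; exists k; rewrite ?mem_iota.
move=> i' j'; rewrite !mem_cat => /orP [i'_ap | /(gasp_alpha_s_ge K_gt0) i'_ge]; last by lia.
case/orP => [/mapP [k' /[!mem_iota] /andP [_ lt_k'] ->] | /[!mem_iota] /andP [j'_ge _]];
  last by lia.
by move: i'_ap; rewrite mem_iota => /andP [_ lt_i'] /(divmod_inj lt_i lt_i') [-> ->].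
Qed.

Lemma gasp_alpha_s_sub K L r m x : 0 < K -> 0 < r -> r <= K ->
  x \in gasp_alpha_s K L (r * m) r ->
  exists2 j, j < r & exists2 t, t < m & x = K * L + j + K * t.
Proof.
move=> K_gt0 r_gt0 r_le_K.
set S := [seq y <- iota 0 (K * L + K * m) | gasp_S K L r y].
have S_large : r * m <= size S.
  set W := [seq K * L + j + K * t | t <- iota 0 m, j <- iota 0 r].
  have W_uniq : uniq W.
    apply: allpairs_uniq; rewrite ?iota_uniq // => y y' /allpairsP [[t j] /=].
    rewrite !mem_iota => -[_ /andP [_ lt_j] ->] /allpairsP [[t' j'] /=].
    rewrite !mem_iota => -[_ /andP [_ lt_j'] ->] /= e.
    have [lt_jK lt_j'K] := (leq_trans lt_j r_le_K, leq_trans lt_j' r_le_K).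
    by have [-> ->] := @divmod_inj K j j' t t' lt_jK lt_j'K ltac:(lia).
  have := uniq_leq_size W_uniq; rewrite size_allpairs !size_iota mulnC; apply.
  move=> y /allpairsP [[t j] /=]; rewrite !mem_iota => -[/andP [_ lt_t] /andP [_ lt_j] ->].
  rewrite mem_filter mem_iota /=; apply/andP; split.
    by apply/(gasp_SP K_gt0); exists j => //; exists t.
  by have := leq_mul (leqnn K) lt_t; rewrite mulnS; lia.
have iota_split : iota 0 (K * L + K * (r * m))
    = iota 0 (K * L + K * m) ++ iota (K * L + K * m) (K * (r * m) - K * m).
  rewrite -iotaD; congr iota.
  have : K * m <= K * (r * m) by rewrite leq_mul2l (leq_pmull _ r_gt0) orbT.
  lia.
rewrite /gasp_alpha_s iota_split filter_cat takel_cat // => /mem_take.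
rewrite mem_filter mem_iota => /andP [/(gasp_SP K_gt0) [j lt_j [t x_eq]] /andP [_ x_lt]].
exists j => //; exists t => //; rewrite ltnNge; apply/negP => m_le_t.
by have := leq_mul (leqnn K) m_le_t; lia.
Qed.

Lemma G_le n : 0 < n -> G n <= n ^ 4 + 2 * n ^ 3 + 2 * n ^ 2.
Proof.
move=> n_gt0; rewrite /G; set N := n ^ 2.
have N_nn : N = n * n by rewrite mulnn.
have n_le_N : n <= N by rewrite N_nn leq_pmulr.
have N_gt0 : 0 < N by lia.
have alpha_s_sub x : x \in gasp_alpha_s N N N n ->
    exists2 j, j < n & exists2 t, t < n & x = N * N + j + N * t.
  by rewrite {3}N_nn; apply: gasp_alpha_s_sub.
set cover := iota 0 (N * N + 2 * N)
  ++ [seq N * N + N * m + j | m <- iota 2 (N - 2), j <- iota 0 n]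
  ++ iota (2 * (N * N)) (N * n + n).
have N_mul_lt k k' : k < k' -> N * k + N <= N * k'.
  by move=> lt_k; rewrite addnC -mulnS leq_mul2l lt_k orbT.
have sums_in_cover : {subset undup (sumset (gasp_alpha_p N ++ gasp_alpha_s N N N n)
                                          (gasp_beta_p N N ++ gasp_beta_s N N N)) <= cover}.
  move=> x; rewrite mem_undup => /allpairsP [[u v] /=]; rewrite !mem_cat !mem_iota.
  move=> -[/orP [/andP [_ u_lt] | /alpha_s_sub [j lt_j [t lt_t ->]]]
          /orP [/mapP [k /[!mem_iota] /andP [_ lt_k] ->] | /andP [v_ge v_lt]] ->].
  - by have := N_mul_lt k N lt_k; lia.
  - by lia.
  - have [m_lt2 | m_ge2] := ltnP (t + k) 2; first by have := N_mul_lt (t + k) 2 m_lt2; lia.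
    have [m_ltN | m_geN] := ltnP (t + k) N.
      apply/orP; right; apply/orP; left; apply/allpairsP; exists (t + k, j).
      by rewrite /= !mem_iota; split; lia.
    have := N_mul_lt (t + k) (N + n) ltac:(lia); have := leq_mul (leqnn N) m_geN; lia.
  - by have := N_mul_lt t n lt_t; lia.
have := uniq_leq_size (undup_uniq _) sums_in_cover.
rewrite /Nsum /cover !size_cat size_allpairs !size_iota mulnBl.
have -> : n ^ 4 = N * N by rewrite -expnD.
have -> : n ^ 3 = N * n by rewrite -expnSr.
have : n <= N * n by rewrite leq_pmull.
lia.
Qed.

Lemma G_ratio_lt n : 2 <= n -> 100 * G n < 138 * (n ^ 4 + 3 * n ^ 2).
Proof.
(* G 2 = 36 and G 3 = 148 are evaluated; the bound of [G_le] only suffices from n = 4 on. *)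
case: n => [|[|[|[|n]]]] // _.
have := G_le (isT : 0 < n.+4); rewrite -addn4; nia.
Qed.

Lemma G_gap_le m n : 0 < n -> n ^ 4 + 3 * n ^ 2 <= m <= G n -> n * (G n - m) <= 2 * m.
Proof.
move=> n_gt0 /andP [m_ge m_le]; have G_le_n := G_le n_gt0.
have : n * (G n - m) <= n * (2 * n ^ 3) by rewrite leq_mul2l; apply/orP; right; lia.
by rewrite mulnCA -expnS; lia.
Qed.

Lemma square_degree_table_Nsum_ge n : 2 <= n -> forall ap as_ bp bs,
  is_degree_table (n ^ 2) (n ^ 2) (n ^ 2) ap as_ bp bs ->
  n ^ 4 + 3 * n ^ 2 <= Nsum (ap ++ as_) (bp ++ bs).
Proof.
move=> n_ge2 ap as_ bp bs table.
have n2_gt1 : 1 < n ^ 2 by rewrite -mulnn; nia.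
by have := Nsum_square_degree_table_ge n2_gt1 n2_gt1 table; rewrite -expnD; lia.
Qed.

Lemma gasp_square_degree_table n : 0 < n ->
  is_degree_table (n ^ 2) (n ^ 2) (n ^ 2)
    (gasp_alpha_p (n ^ 2)) (gasp_alpha_s (n ^ 2) (n ^ 2) (n ^ 2) n)
    (gasp_beta_p (n ^ 2) (n ^ 2)) (gasp_beta_s (n ^ 2) (n ^ 2) (n ^ 2)).
Proof. by move=> n_gt0; apply: gasp_degree_table; rewrite ?expn_gt0 ?n_gt0. Qed.

Lemma G_ge n : 2 <= n -> n ^ 4 + 3 * n ^ 2 <= G n.
Proof.
move=> n_ge2; apply: square_degree_table_Nsum_ge => //.
by apply: gasp_square_degree_table; lia.
Qed.

(** * Optimality *)

Definition is_min_Nsum K L T k :=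
  (exists ap as_ bp bs, is_degree_table K L T ap as_ bp bs /\ Nsum (ap ++ as_) (bp ++ bs) = k) /\
  (forall ap as_ bp bs, is_degree_table K L T ap as_ bp bs -> k <= Nsum (ap ++ as_) (bp ++ bs)).

Lemma min_Nsum_exists K L T ap as_ bp bs :
  is_degree_table K L T ap as_ bp bs -> exists k, is_min_Nsum K L T k.
Proof.
move=> table.
pose attained k := `[< exists ap as_ bp bs,
  is_degree_table K L T ap as_ bp bs /\ Nsum (ap ++ as_) (bp ++ bs) = k >].
have attained_ex : exists k, attained k.
  by exists (Nsum (ap ++ as_) (bp ++ bs)); apply/asboolP; exists ap, as_, bp, bs.
case: (ex_minnP attained_ex) => k /asboolP k_attained k_min; exists k; split => //.
by move=> ap' as' bp' bs' table'; apply: k_min; apply/asboolP; exists ap', as', bp', bs'.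
Qed.

Lemma min_Nsum_square_exists :
  exists m : nat -> nat, forall n, 0 < n -> is_min_Nsum (n ^ 2) (n ^ 2) (n ^ 2) (m n).
Proof.
have min_exists n : exists k, 0 < n -> is_min_Nsum (n ^ 2) (n ^ 2) (n ^ 2) k.
  case: n => [|n]; first by exists 0.
  by have [k k_min] := min_Nsum_exists (gasp_square_degree_table (ltn0Sn n)); exists k.
by have [m m_min] := choice min_exists; exists m.
Qed.

Local Open Scope classical_set_scope.
Local Open Scope ring_scope.

Lemma ratio_cvg1 (R : realType) (g m : nat -> nat) (c n0 : nat) :
  (forall n, (n0 <= n)%N -> [/\ (0 < m n)%N, (m n <= g n)%N & (n * (g n - m n) <= c * m n)%N]) ->
  (fun n => (g n)%:R / (m n)%:R : R) @ \oo --> (1 : R).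
Proof.
move=> bounds; apply/cvgrPdist_le => eps eps_gt0; near=> n.
have n_ge : (n0 <= n)%N by near: n; exact: nbhs_infty_ge.
have n_gt0 : (0 < n)%N by near: n; exact: nbhs_infty_ge.
have n_large : c%:R / eps <= n%:R :> R by near: n; exact: nbhs_infty_ger.
have [m_gt0 m_le_g gap] := bounds n n_ge.
have M_gt0 : 0 < (m n)%:R :> R by rewrite ltr0n.
have gapR : n%:R * ((g n)%:R - (m n)%:R) <= c%:R * (m n)%:R :> R.
  by rewrite -natrB // -!natrM ler_nat.
have c_le : c%:R <= n%:R * eps :> R by rewrite -ler_pdivrMr.
have nR_gt0 : 0 < n%:R :> R by rewrite ltr0n.
have g_ge : (m n)%:R <= (g n)%:R :> R by rewrite ler_nat.
have -> : 1 - (g n)%:R / (m n)%:R = - (((g n)%:R - (m n)%:R) / (m n)%:R) :> R.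
  by rewrite mulrBl divff ?lt0r_neq0 // opprB.
rewrite normrN ger0_norm; last by rewrite divr_ge0 ?subr_ge0 // ltW.
rewrite ler_pdivrMr //; nra.
Unshelve. all: by end_near.
Qed.

Lemma ltr_nat_ratio (R : numFieldType) (a b p q : nat) :
  (0 < b)%N -> (0 < q)%N -> (q * a < p * b)%N -> a%:R / b%:R < p%:R / q%:R :> R.
Proof.
move=> b_gt0 q_gt0 lt_ab.
by rewrite ltr_pdivrMr ?ltr0n // mulrAC ltr_pdivlMr ?ltr0n // -!natrM ltr_nat mulnC.
Qed.

Theorem corollary1 (R : realType) :
  [/\ (forall n : nat, (2 <= n)%N ->
         forall ap as_ bp bs : seq nat,
           is_degree_table (n ^ 2) (n ^ 2) (n ^ 2) ap as_ bp bs ->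
           (n ^ 4 + 3 * n ^ 2 <= Nsum (ap ++ as_) (bp ++ bs))%N),
      (forall n : nat, (2 <= n)%N ->
         (G n)%:R / (n ^ 4 + 3 * n ^ 2)%:R < 138 / 100 :> R),
      (fun n : nat => (G n)%:R / (n ^ 4 + 3 * n ^ 2)%:R : R) @ \oo --> (1 : R) &
      exists m : nat -> nat,
        (forall n : nat, (2 <= n)%N ->
           (exists ap as_ bp bs,
              is_degree_table (n ^ 2) (n ^ 2) (n ^ 2) ap as_ bp bs /\
              Nsum (ap ++ as_) (bp ++ bs) = m n) /\
           (forall ap as_ bp bs,
              is_degree_table (n ^ 2) (n ^ 2) (n ^ 2) ap as_ bp bs ->
              (m n <= Nsum (ap ++ as_) (bp ++ bs))%N)) /\
        (fun n : nat => (G n)%:R / (m n)%:R : R) @ \oo --> (1 : R)].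
Proof.
have [m m_min] := min_Nsum_square_exists.
have bound_gt0 n : (2 <= n)%N -> (0 < n ^ 4 + 3 * n ^ 2)%N.
  by move=> n_ge2; rewrite addn_gt0 expn_gt0 (ltnW n_ge2).
split.
- exact: square_degree_table_Nsum_ge.
- by move=> n n_ge2; apply: ltr_nat_ratio (G_ratio_lt n_ge2); rewrite ?bound_gt0.
- apply: (@ratio_cvg1 R G _ 2 2) => n n_ge2; split; rewrite ?bound_gt0 ?G_ge //.
  by apply: G_gap_le; rewrite ?leqnn ?G_ge //; lia.
exists m; split; first by move=> n n_ge2; apply: m_min; lia.
apply: (@ratio_cvg1 R G m 2 2) => n n_ge2.
have [[ap [as_ [bp [bs [table <-]]]]] min_le] := m_min n (ltnW n_ge2).
have min_le_G := min_le _ _ _ _ (gasp_square_degree_table (ltnW n_ge2)).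
have min_ge := square_degree_table_Nsum_ge n_ge2 table.
split => //; first exact: leq_trans (bound_gt0 n n_ge2) min_ge.
by apply: G_gap_le; rewrite ?min_ge ?min_le_G //; lia.
Qed.
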